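(* Let $\mathbb{K}$ be a field, $G=\operatorname{SL}_2(\mathbb{K})$, and $V$ a $G$-module of length $n$. Then the subgroup $\langle G\cdot (Z_1(V) \cap w\cdot Z_{n-1}(V))\rangle$ of $V$ generated by the $G$-translates of $Z_1(V) \cap w\cdot Z_{n-1}(V)$ has length at most $n-1$ (indeed it is contained in $Z_{n-1}(V)$).
   Context: $G = \operatorname{SL}_2(\mathbb{K})$ is regarded as an abstract group and a $G$-module is a $\mathbb{Z}[G]$-module. Let $w = \begin{pmatrix}0 & 1 \\ -1 & 0 \end{pmatrix}$ and $U = \left\{\begin{pmatrix}1 & \lambda \\ 0 & 1\end{pmatrix}:\lambda\in\mathbb{K}\right\}$. For a $G$-module $V$ set $Z_0(V) = 0$ and define $Z_{k+1}(V)$ by $Z_{k+1}(V)/Z_k(V) = C_{V/Z_k(V)}(U)$ (the fixed points of $U$ in the quotient). The length of $V$ (or of a $U$-invariant subgroup) is the least $k$ with $Z_k = $ the whole module, i.e. the least $k$ such that $k$-fold iterated commutators with $U$ vanish. *)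

From HB Require Import structures.
From mathcomp Require Import all_boot all_order all_algebra.
Set Implicit Arguments. Unset Strict Implicit. Unset Printing Implicit Defensive.
Import GRing.Theory.
Local Open Scope ring_scope.

Definition inSL2 (K : fieldType) (g : 'M[K]_2) : bool := \det g == 1.

(* A G-module: an abelian group V (zmodType) with an action of SL_2(K)
   by group endomorphisms (values of act outside SL_2 are irrelevant). *)
Definition is_SL2_module (K : fieldType) (V : zmodType)
  (act : 'M[K]_2 -> V -> V) : Prop :=
  [/\ (forall g, inSL2 g -> forall x y, act g (x - y) = act g x - act g y),
      (forall v, act 1%:M v = v)
    & (forall g h, inSL2 g -> inSL2 h -> forall v,
          act (g *m h) v = act g (act h v))].

Definition wmx (K : fieldType) : 'M[K]_2 :=
  delta_mx 0 1 - delta_mx 1 0.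
Definition umx (K : fieldType) (l : K) : 'M[K]_2 :=
  1%:M + l *: delta_mx 0 1.

(* Z_k(V): Z_0 = 0 and v \in Z_{k+1} iff v + Z_k is U-fixed in V/Z_k,
   i.e. u v - v \in Z_k for all u \in U. *)
Fixpoint Zk (K : fieldType) (V : zmodType) (act : 'M[K]_2 -> V -> V)
  (k : nat) (v : V) : Prop :=
  match k with
  | 0 => v = 0
  | k'.+1 => forall l : K, Zk act k' (act (umx l) v - v)
  end.

Definition has_length (K : fieldType) (V : zmodType)
  (act : 'M[K]_2 -> V -> V) (n : nat) : Prop :=
  (forall v, Zk act n v) /\
  (forall k, (forall v, Zk act k v) -> (n <= k)%N).

Inductive gen_subgroup (V : zmodType) (S : V -> Prop) : V -> Prop :=
  | gen_in : forall x, S x -> gen_subgroup S x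
  | gen_0 : gen_subgroup S 0
  | gen_sub : forall x y, gen_subgroup S x -> gen_subgroup S y ->
              gen_subgroup S (x - y).

Definition G_translates (K : fieldType) (V : zmodType)
  (act : 'M[K]_2 -> V -> V) (S : V -> Prop) : V -> Prop :=
  fun v => exists g x, inSL2 g /\ S x /\ v = act g x.

(* Length of a U-invariant subgroup W is at most k iff its k-fold iterated
   commutators with U vanish, i.e. every element of W lies in Z_k(V). *)
Definition length_le (K : fieldType) (V : zmodType)
  (act : 'M[K]_2 -> V -> V) (W : V -> Prop) (k : nat) : Prop :=
  forall v, W v -> Zk act k v.

From mathcomp Require Import all_boot all_order all_algebra ring.
Set Implicit Arguments. Unset Strict Implicit. Unset Printing Implicit Defensive.
Import GRing.Theory.
Local Open Scope ring_scope.

(* Each Z_k(V) is a subgroup, stable under the Borel subgroup B of upper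
   triangular matrices because B normalises U.  Let x = w z be U-fixed with
   z in Z_k; then x lies in Z_k too, so g x does for g in B.  For g outside B
   the Bruhat decomposition makes b := g u(-m) w upper triangular, where
   m = g_11 / g_10; as u(m) fixes x, g x = g u(-m) u(m) x = b z lies in Z_k.
   So all G-translates of x, and the subgroup they generate, lie in Z_k. *)

Lemma det_mx2 (K : fieldType) (A : 'M[K]_2) :
  \det A = A 0 0 * A 1 1 - A 0 1 * A 1 0.
Proof.
rewrite (expand_det_row _ 0) !big_ord_recl big_ord0 /cofactor !det_mx11 !mxE /=.
rewrite !addr0 expr0 expr1 mul1r mulN1r mulrN.
have -> : lift 0 0 = 1 :> 'I_2 by apply/val_inj.
by have -> : lift 1 0 = 0 :> 'I_2 by apply/val_inj.
Qed.

Lemma mulmx2E (K : fieldType) (A B : 'M[K]_2) i j :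
  (A *m B) i j = A i 0 * B 0 j + A i 1 * B 1 j.
Proof.
rewrite mxE !big_ord_recl big_ord0 addr0.
by have -> : lift ord0 ord0 = 1 :> 'I_2 by apply/val_inj.
Qed.

Lemma mx2P (K : fieldType) (A B : 'M[K]_2) :
  A 0 0 = B 0 0 -> A 0 1 = B 0 1 -> A 1 0 = B 1 0 -> A 1 1 = B 1 1 -> A = B.
Proof.
move=> e00 e01 e10 e11; apply/matrixP => i j.
have ord2 (k : 'I_2) : k = 0 \/ k = 1.
  by case: k => [[|[|k]]] lt_k //; [left|right]; apply/val_inj.
by case: (ord2 i) => ->; case: (ord2 j) => ->.
Qed.

Lemma umx_SL2 (K : fieldType) (l : K) : inSL2 (umx l).
Proof. by rewrite /inSL2 det_mx2 /umx !mxE /=; apply/eqP; ring. Qed.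

Lemma wmx_SL2 (K : fieldType) : inSL2 (wmx K).
Proof. by rewrite /inSL2 det_mx2 /wmx !mxE /=; apply/eqP; ring. Qed.

Lemma mulmx_SL2 (K : fieldType) (g h : 'M[K]_2) :
  inSL2 g -> inSL2 h -> inSL2 (g *m h).
Proof. by rewrite /inSL2 detM => /eqP-> /eqP->; rewrite mulr1. Qed.

Lemma umxNK (K : fieldType) (m : K) : umx (- m) *m umx m = 1%:M.
Proof. by apply: mx2P; rewrite !mulmx2E /umx !mxE /=; ring. Qed.

Lemma umx_mul_upper (K : fieldType) (b : 'M[K]_2) (l : K) :
  inSL2 b -> b 1 0 = 0 -> umx l *m b = b *m umx (l * b 1 1 ^+ 2).
Proof.
rewrite /inSL2 det_mx2 => /eqP det_b b10; rewrite b10 mulr0 subr0 in det_b.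
apply: mx2P; rewrite !mulmx2E /umx !mxE /= ?b10; try ring.
rewrite (_ : b 0 0 * (0 + l * b 1 1 ^+ 2 * 1) = (b 0 0 * b 1 1) * (l * b 1 1)).
  by rewrite det_b; ring.
by ring.
Qed.

Lemma bruhat_upper (K : fieldType) (g : 'M[K]_2) : g 1 0 != 0 ->
  (g *m umx (- (g 1 1 / g 1 0)) *m wmx K) 1 0 = 0.
Proof. by move=> g10; rewrite !mulmx2E /umx /wmx !mxE /=; field. Qed.

Section SL2Module.

Variables (K : fieldType) (V : zmodType) (act : 'M[K]_2 -> V -> V).
Hypothesis act_module : is_SL2_module act.

Let actB g : inSL2 g -> forall x y, act g (x - y) = act g x - act g y.
Proof. by have [actB _ _] := act_module; apply: actB. Qed.

Let actM g h : inSL2 g -> inSL2 h -> forall v, act (g *m h) v = act g (act h v).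
Proof. by have [_ _ actM] := act_module; apply: actM. Qed.

Lemma act0 g : inSL2 g -> act g 0 = 0.
Proof. by move=> SLg; have := actB SLg 0 0; rewrite !subrr. Qed.

Lemma Zk0 k : Zk act k 0.
Proof. by elim: k => [|k IHk] //= l; rewrite act0 ?umx_SL2 // subrr. Qed.

Lemma ZkB k x y : Zk act k x -> Zk act k y -> Zk act k (x - y).
Proof.
elim: k x y => [|k IHk] x y /=; first by move=> -> ->; rewrite subrr.
move=> Zx Zy l; rewrite actB ?umx_SL2 //.
have -> : act (umx l) x - act (umx l) y - (x - y)
        = (act (umx l) x - x) - (act (umx l) y - y).
  by rewrite !opprB addrACA [- act _ y + _]addrC -addrACA addrC.
exact: IHk.
Qed.

Lemma ZkS k x : Zk act k x -> Zk act k.+1 x.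
Proof.
elim: k x => [|k IHk] x /=; last by move=> Zx l; apply: IHk.
by move=> -> l; rewrite act0 ?umx_SL2 // subrr.
Qed.

Lemma Zk_leq i j x : (i <= j)%N -> Zk act i x -> Zk act j x.
Proof.
elim: j => [|j IHj]; first by rewrite leqn0 => /eqP ->.
by rewrite leq_eqVlt => /orP [/eqP -> //|lt_ij] Zx; apply/ZkS/IHj.
Qed.

Lemma Zk_upper k b y : inSL2 b -> b 1 0 = 0 -> Zk act k y -> Zk act k (act b y).
Proof.
move=> SLb b10; elim: k y => [|k IHk] y /=; first by move=> ->; rewrite act0.
move=> Zy l; rewrite -actM ?umx_SL2 // (umx_mul_upper l SLb b10).
by rewrite actM ?umx_SL2 // -actB //; apply: IHk.
Qed.

Lemma U_fixed_w_Zk k z : Zk act 1 (act (wmx K) z) -> Zk act k z ->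
  Zk act k (act (wmx K) z).
Proof.
case: k => [|k] Z1x Zz; first by rewrite /= Zz act0 ?wmx_SL2.
exact: Zk_leq Z1x.
Qed.

Lemma Zk_translate k g z : inSL2 g ->
  Zk act 1 (act (wmx K) z) -> Zk act k z -> Zk act k (act g (act (wmx K) z)).
Proof.
move=> SLg Z1x Zz; have Zkx := U_fixed_w_Zk Z1x Zz.
have [g10|g10] := eqVneq (g 1 0) 0; first exact: Zk_upper.
set m := g 1 1 / g 1 0.
have fix_x : act (umx m) (act (wmx K) z) = act (wmx K) z.
  by apply: subr0_eq; apply: Z1x.
have -> : g = (g *m umx (- m)) *m umx m by rewrite -mulmxA umxNK mulmx1.
have SLgu : inSL2 (g *m umx (- m)) by apply: mulmx_SL2; rewrite ?umx_SL2.
rewrite actM ?umx_SL2 // fix_x -actM ?wmx_SL2 //.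
by apply: Zk_upper (bruhat_upper g10) Zz; apply: mulmx_SL2; rewrite ?wmx_SL2.
Qed.

Lemma gen_translates_Zk k v :
  gen_subgroup (G_translates act
    (fun x => Zk act 1 x /\ exists z, Zk act k z /\ x = act (wmx K) z)) v ->
  Zk act k v.
Proof.
elim=> [x [g [y [SLg [[Z1y [z [Zz y_def]]] ->]]]]| |x y _ Zx _ Zy].
- by subst y; exact: Zk_translate SLg Z1y Zz.
- exact: Zk0.
- exact: ZkB Zx Zy.
Qed.

End SL2Module.

Theorem mainTheorem8 (K : fieldType) (V : zmodType)
  (act : 'M[K]_2 -> V -> V) (n : nat) :
  is_SL2_module act -> has_length act n ->
  let S := fun v : V => Zk act 1 v /\
             exists z, Zk act n.-1 z /\ v = act (wmx K) z in
  let W := gen_subgroup (G_translates act S) in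
  length_le act W n.-1 /\ (forall v, W v -> Zk act n.-1 v).
Proof.
move=> act_module _ S W.
have W_Zk v : W v -> Zk act n.-1 v by apply: gen_translates_Zk.
by split.
Qed.
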